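(* Fix a start pose $\mathbf{p}_0$ and a CSC path type with inputs satisfying $r_1=r_3$ (e.g. the constant-speed Dubins LSL path with $v_1=v_3$, $\omega_1=\omega_3>0$, or the Dubins RSR path with $v_1=v_3$, $\omega_1=\omega_3<0$). Then every pose $\mathbf{p}_f\in\mathbb{R}^2\times[0,2\pi)$ is reachable from $\mathbf{p}_0$ by that CSC path type.
   Context: A pose is $\mathbf{p}=(x,y,\theta)$, heading understood modulo $2\pi$. An input is $\mathbf{u}=(v,\omega)$ with $v>0$. The motion primitive $\mathrm{M}_{\mathbf{u},\tau}$ maps $(x,y,\theta)$ to: if $\omega\neq0$, $\big(x-\frac{v}{\omega}(\sin\theta-\sin(\theta+\omega\tau)),\ y+\frac{v}{\omega}(\cos\theta-\cos(\theta+\omega\tau)),\ \theta+\omega\tau\big)$; if $\omega=0$, $(x+v\tau\cos\theta,\ y+v\tau\sin\theta,\ \theta)$. A CSC path uses inputs $\mathbf{u}_1,\mathbf{u}_2,\mathbf{u}_3$ with $\omega_1\neq0$, $\omega_2=0$, $\omega_3\neq 0$; LSL means $\omega_1,\omega_3>0$ and RSR means $\omega_1,\omega_3<0$. For fixed inputs, $\mathbf{p}_f$ is reachable from $\mathbf{p}_0$ if there exist $\tau_1,\tau_2,\tau_3\ge0$, with $|\omega_i\tau_i|<2\pi$ for turning segments, such that $\mathrm{M}_{\mathbf{u}_3,\tau_3}(\mathrm{M}_{\mathbf{u}_2,\tau_2}(\mathrm{M}_{\mathbf{u}_1,\tau_1}(\mathbf{p}_0)))$ has position $(x_f,y_f)$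 and heading congruent to $\theta_f$ modulo $2\pi$. Notation: $r_i=v_i/\omega_i$. *)

From Stdlib Require Import Reals Lra.
Open Scope R_scope.

(* A pose (x, y, theta); heading understood modulo 2*PI. *)
Record pose := Pose { px : R; py : R; pth : R }.

Record input := Input { iv : R; iom : R }.

Definition motion (u : input) (tau : R) (p : pose) : pose :=
  let v := iv u in let w := iom u in
  let x := px p in let y := py p in let th := pth p in
  if Req_EM_T w 0 then
    Pose (x + v * tau * cos th) (y + v * tau * sin th) th
  else
    Pose (x - v / w * (sin th - sin (th + w * tau)))
         (y + v / w * (cos th - cos (th + w * tau)))
         (th + w * tau).

Definition heading_congr (a b : R) : Prop :=
  exists k : Z, a = b + 2 * PI * IZR k.

Definition CSC_inputs (u1 u2 u3 : input) : Prop :=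
  0 < iv u1 /\ 0 < iv u2 /\ 0 < iv u3 /\
  iom u1 <> 0 /\ iom u2 = 0 /\ iom u3 <> 0.

Definition radius (u : input) : R := iv u / iom u.

Definition CSC_reachable (u1 u2 u3 : input) (p0 pf : pose) : Prop :=
  exists tau1 tau2 tau3 : R,
    0 <= tau1 /\ 0 <= tau2 /\ 0 <= tau3 /\
    Rabs (iom u1 * tau1) < 2 * PI /\ Rabs (iom u3 * tau3) < 2 * PI /\
    let q := motion u3 tau3 (motion u2 tau2 (motion u1 tau1 p0)) in
    px q = px pf /\ py q = py pf /\ heading_congr (pth q) (pth pf).

(* A turning segment of radius r keeps the point (x - r sin th, y + r cos th), the centre of its
   circle, fixed, while a straight segment translates that centre by its own displacement. With
   r1 = r3 the first and last circles have the same radius, so one chooses the initial turn to face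
   from the start centre towards the goal centre, drives straight over their distance, and finishes
   with the turn that brings the heading to th_f; the final position is then the goal centre offset
   by the radius in the direction determined by th_f, i.e. the goal position. *)
From Stdlib Require Import Reals Lra Lia ZArith.
Open Scope R_scope.

Lemma cos_sin_period_Z (x : R) (k : Z) :
  cos (x + 2 * PI * IZR k) = cos x /\ sin (x + 2 * PI * IZR k) = sin x.
Proof.
  assert (period_nat : forall y (n : nat),
            cos (y + 2 * PI * INR n) = cos y /\ sin (y + 2 * PI * INR n) = sin y).
  { intros y n. replace (y + 2 * PI * INR n) with (y + 2 * INR n * PI) by ring.
    split; [apply cos_period | apply sin_period]. }
  destruct (Z_le_gt_dec 0 k) as [k_ge0 | k_lt0].
  - replace k with (Z.of_nat (Z.to_nat k)) by lia.
    rewrite <- INR_IZR_INZ. apply period_nat.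
  - replace k with (- Z.of_nat (Z.to_nat (- k)))%Z by lia.
    rewrite opp_IZR, <- INR_IZR_INZ.
    destruct (period_nat (x + 2 * PI * - INR (Z.to_nat (- k))) (Z.to_nat (- k))) as [C S].
    rewrite Rplus_assoc, <- Rmult_plus_distr_l, Rplus_opp_l, Rmult_0_r, Rplus_0_r in C, S.
    split; symmetry; assumption.
Qed.

Lemma heading_congr_cos_sin (a b : R) :
  heading_congr a b -> cos a = cos b /\ sin a = sin b.
Proof. intros [k ->]. apply cos_sin_period_Z. Qed.

Lemma turn_duration_exists (w psi : R) : w <> 0 ->
  exists tau, 0 <= tau /\ Rabs (w * tau) < 2 * PI /\ heading_congr (w * tau) psi.
Proof.
  intros w_neq0.
  assert (twoPI_gt0 : 0 < 2 * PI) by (pose proof PI_RGT_0; lra).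
  destruct (Rlt_or_le 0 w) as [w_gt0 | w_le0].
  - destruct (euclidian_division psi (2 * PI)) as [k [r [psi_eq r_bnd]]]; [lra |].
    rewrite Rabs_right in r_bnd by lra.
    exists (r / w). replace (w * (r / w)) with r by (field; lra).
    split; [apply Rle_mult_inv_pos; lra |].
    rewrite Rabs_right by lra. split; [lra |].
    exists (- k)%Z. rewrite opp_IZR, psi_eq. ring.
  - destruct (euclidian_division (- psi) (2 * PI)) as [k [r [psi_eq r_bnd]]]; [lra |].
    rewrite Rabs_right in r_bnd by lra.
    exists (r / - w). replace (w * (r / - w)) with (- r) by (field; lra).
    split; [apply Rle_mult_inv_pos; lra |].
    rewrite Rabs_left1 by lra. split; [lra |].
    exists k. lra.
Qed.

Lemma unit_circle_angle (x y : R) :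
  x * x + y * y = 1 -> exists phi, x = cos phi /\ y = sin phi.
Proof.
  intros unit.
  assert (x_bnd : -1 <= x <= 1) by (split; nra).
  assert (sin_acos_abs : sin (acos x) = Rabs y).
  { rewrite sin_acos by lra. unfold Rsqr. apply sqrt_lem_1; [nra | apply Rabs_pos |].
    rewrite <- Rabs_mult, Rabs_right by nra. lra. }
  destruct (Rle_or_lt 0 y) as [y_ge0 | y_lt0].
  - exists (acos x). rewrite cos_acos, sin_acos_abs, Rabs_right by lra. auto.
  - exists (- acos x).
    rewrite cos_neg, sin_neg, cos_acos, sin_acos_abs, Rabs_left by lra. split; ring.
Qed.

Lemma polar_form (a b : R) :
  exists phi, a = sqrt (a * a + b * b) * cos phi /\ b = sqrt (a * a + b * b) * sin phi.
Proof.
  set (s := sqrt (a * a + b * b)).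
  assert (s_sq : s * s = a * a + b * b) by (apply sqrt_sqrt; nra).
  destruct (Req_dec s 0) as [s_eq0 | s_neq0].
  - exists 0. rewrite s_eq0 in s_sq |- *. split; nra.
  - destruct (unit_circle_angle (a / s) (b / s)) as [phi [Ca Sb]].
    { replace (a / s * (a / s) + b / s * (b / s)) with ((a * a + b * b) / (s * s))
        by (field; lra).
      rewrite s_sq. field. intros E. apply s_neq0, Rsqr_0_uniq. unfold Rsqr. lra. }
    exists phi. rewrite <- Ca, <- Sb. split; field; lra.
Qed.

Definition center_x (r : R) (p : pose) : R := px p - r * sin (pth p).
Definition center_y (r : R) (p : pose) : R := py p + r * cos (pth p).

Section TurningSegment.

Variables (u : input) (tau : R) (p : pose).
Hypothesis turning : iom u <> 0.

Lemma motion_turn_heading : pth (motion u tau p) = pth p + iom u * tau.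
Proof. unfold motion. destruct (Req_EM_T (iom u) 0); [contradiction | reflexivity]. Qed.

Lemma motion_turn_center_x : center_x (radius u) (motion u tau p) = center_x (radius u) p.
Proof.
  unfold center_x, radius, motion.
  destruct (Req_EM_T (iom u) 0); [contradiction |]. simpl. ring.
Qed.

Lemma motion_turn_center_y : center_y (radius u) (motion u tau p) = center_y (radius u) p.
Proof.
  unfold center_y, radius, motion.
  destruct (Req_EM_T (iom u) 0); [contradiction |]. simpl. ring.
Qed.

End TurningSegment.

Lemma turn_to_heading_exists (u : input) (p : pose) (psi : R) : iom u <> 0 ->
  exists tau, 0 <= tau /\ Rabs (iom u * tau) < 2 * PI /\
              heading_congr (pth (motion u tau p)) psi.
Proof.
  intros turning.
  destruct (turn_duration_exists (iom u) (psi - pth p) turning) as [tau [tau_ge0 [tau_lt [k Hk]]]].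
  exists tau. do 2 (split; [assumption |]).
  exists k. rewrite motion_turn_heading by assumption. lra.
Qed.

Section StraightSegment.

Variables (u : input) (tau r : R) (p : pose).
Hypothesis straight : iom u = 0.

Lemma motion_straight_heading : pth (motion u tau p) = pth p.
Proof. unfold motion. destruct (Req_EM_T (iom u) 0); [reflexivity | contradiction]. Qed.

Lemma motion_straight_center_x :
  center_x r (motion u tau p) = center_x r p + iv u * tau * cos (pth p).
Proof.
  unfold center_x, motion.
  destruct (Req_EM_T (iom u) 0); [simpl; ring | contradiction].
Qed.

Lemma motion_straight_center_y :
  center_y r (motion u tau p) = center_y r p + iv u * tau * sin (pth p).
Proof.
  unfold center_y, motion.
  destruct (Req_EM_T (iom u) 0); [simpl; ring | contradiction].
Qed.

End StraightSegment.

Section CSCPath.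

Variables (u1 u2 u3 : input) (t1 t2 t3 : R) (p : pose).
Hypotheses (turning1 : iom u1 <> 0) (straight2 : iom u2 = 0) (turning3 : iom u3 <> 0).
Hypothesis same_radius : radius u1 = radius u3.

Let q := motion u3 t3 (motion u2 t2 (motion u1 t1 p)).

Lemma csc_center_x :
  center_x (radius u1) q = center_x (radius u1) p + iv u2 * t2 * cos (pth (motion u1 t1 p)).
Proof.
  unfold q. rewrite same_radius, motion_turn_center_x, <- same_radius,
    motion_straight_center_x, motion_turn_center_x by assumption.
  reflexivity.
Qed.

Lemma csc_center_y :
  center_y (radius u1) q = center_y (radius u1) p + iv u2 * t2 * sin (pth (motion u1 t1 p)).
Proof.
  unfold q. rewrite same_radius, motion_turn_center_y, <- same_radius,
    motion_straight_center_y, motion_turn_center_y by assumption.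
  reflexivity.
Qed.

End CSCPath.

Lemma pose_position_eq_of_center (r : R) (p q : pose) :
  center_x r p = center_x r q -> center_y r p = center_y r q ->
  heading_congr (pth p) (pth q) -> px p = px q /\ py p = py q.
Proof.
  unfold center_x, center_y. intros Cx Cy Hpq.
  destruct (heading_congr_cos_sin _ _ Hpq) as [C S].
  rewrite C, S in *. split; lra.
Qed.

Theorem mainTheorem6 (u1 u2 u3 : input) (p0 : pose) :
  CSC_inputs u1 u2 u3 ->
  radius u1 = radius u3 ->
  forall pf : pose, 0 <= pth pf < 2 * PI ->
  CSC_reachable u1 u2 u3 p0 pf.
Proof.
  intros [_ [v2_gt0 [_ [w1_neq0 [w2_eq0 w3_neq0]]]]] same_radius pf _.
  set (r := radius u1).
  set (dx := center_x r pf - center_x r p0).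
  set (dy := center_y r pf - center_y r p0).
  destruct (polar_form dx dy) as [phi [dx_eq dy_eq]].
  set (d := sqrt (dx * dx + dy * dy)) in *.
  destruct (turn_to_heading_exists u1 p0 phi w1_neq0) as [t1 [t1_ge0 [t1_lt q1_heading]]].
  set (q1 := motion u1 t1 p0) in q1_heading.
  set (q2 := motion u2 (d / iv u2) q1).
  destruct (turn_to_heading_exists u3 q2 (pth pf) w3_neq0) as [t3 [t3_ge0 [t3_lt q3_heading]]].
  set (q3 := motion u3 t3 q2) in q3_heading.
  assert (drive_ge0 : 0 <= d / iv u2) by (apply Rle_mult_inv_pos; [apply sqrt_pos | lra]).
  exists t1, (d / iv u2), t3.
  refine (conj t1_ge0 (conj drive_ge0 (conj t3_ge0 (conj t1_lt (conj t3_lt _))))).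
  fold q1 q2 q3.
  destruct (heading_congr_cos_sin _ _ q1_heading) as [cos_q1 sin_q1].
  assert (drive : iv u2 * (d / iv u2) = d) by (field; lra).
  enough (px q3 = px pf /\ py q3 = py pf) by tauto.
  apply (pose_position_eq_of_center r); [| | exact q3_heading]; unfold q3, q2, q1, r.
  - rewrite csc_center_x by assumption. fold q1. rewrite drive, cos_q1, <- dx_eq. unfold dx, r. ring.
  - rewrite csc_center_y by assumption. fold q1. rewrite drive, sin_q1, <- dy_eq. unfold dy, r. ring.
Qed.
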